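(* Let $p\in(1,\infty)$, $q=p/(p-1)$, $R_0\in\mathbb{R}^{\mathcal{S}\times\mathcal{A}}$, $\alpha>0$ and $\mathcal{R}_p=\{R:\|R-R_0\|_p\le\alpha\}$. Fix a stationary policy $\pi\in\Pi$ and define the operator on $\mathbb{R}^{\mathcal{S}}$ $$[\mathcal{T}^{\pi,\mathrm{reg}}_{\mathcal{R}_p}v](s)=(\mathcal{T}^\pi_{R_0}v)(s)-\alpha\,\frac{\sum_a\pi_s(a)\,d^\pi(s,a)^{q-1}}{\|d^\pi\|_q^{q-1}},\qquad s\in\mathcal{S}.$$ Then for any $v_0\in\mathbb{R}^{\mathcal{S}}$ the sequence $v_{n+1}=\mathcal{T}^{\pi,\mathrm{reg}}_{\mathcal{R}_p}v_n$ converges linearly to the robust value function $v^\pi_{\mathcal{R}_p}$.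
   Context: Finite MDP with finite state space $\mathcal{S}$, finite action space $\mathcal{A}$, transition kernel $P$, discount $\gamma\in[0,1)$, initial distribution $\mu$ with $\mu(s)>0$ for all $s$. $\Pi$: stationary randomized policies, $\pi_s(a)=\pi(a|s)$; $R^\pi(s)=\sum_a\pi_s(a)R(s,a)$, $P^\pi(s'|s)=\sum_a\pi_s(a)P(s'|s,a)$; $(\mathcal{T}^\pi_Rv)(s)=R^\pi(s)+\gamma\sum_{s'}P^\pi(s'|s)v(s')$; $v^\pi_R=(I-\gamma P^\pi)^{-1}R^\pi$. Occupancy: $d^\pi=\mu^\top(I-\gamma P^\pi)^{-1}$, $d^\pi(s,a)=d^\pi(s)\pi_s(a)$, $\|d^\pi\|_q$ the $L_q$ norm over $\mathcal{S}\times\mathcal{A}$. Return $\rho^\pi_R=\sum_{s,a}d^\pi(s,a)R(s,a)$. The worst-case reward $R^\pi_p$ is the (unique) minimizer of $R\mapsto\rho^\pi_R$ over $\mathcal{R}_p$, and the robust value function is $v^\pi_{\mathcal{R}_p}:=v^\pi_{R^\pi_p}$. *)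

From HB Require Import structures.
From mathcomp Require Import all_boot all_order all_algebra.
From mathcomp Require Import reals exp.
Set Implicit Arguments. Unset Strict Implicit. Unset Printing Implicit Defensive.
Import Order.TTheory GRing.Theory Num.Theory.
Local Open Scope ring_scope.

Section MDP.
Variables (R : realType) (nS nA : nat).

(* pi s a = pi(a|s) ; P s a s' = P(s'|s,a) ; rewards are 'M_(nS,nA) *)
Definition is_policy (pi : 'M[R]_(nS, nA)) : Prop :=
  (forall s a, 0 <= pi s a) /\ (forall s, \sum_a pi s a = 1).

Definition is_kernel (P : 'I_nS -> 'I_nA -> 'I_nS -> R) : Prop :=
  (forall s a s', 0 <= P s a s') /\ (forall s a, \sum_s' P s a s' = 1).

Definition is_init_dist (mu : 'rV[R]_nS) : Prop :=
  (forall s, 0 < mu 0 s) /\ \sum_s mu 0 s = 1.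

Definition Ppi (P : 'I_nS -> 'I_nA -> 'I_nS -> R) (pi : 'M[R]_(nS, nA))
  : 'M[R]_nS := \matrix_(s, s') \sum_a pi s a * P s a s'.

Definition Rpi (pi Rw : 'M[R]_(nS, nA)) : 'cV[R]_nS :=
  \col_s \sum_a pi s a * Rw s a.

Definition bellman (gamma : R) P pi Rw (v : 'cV[R]_nS) : 'cV[R]_nS :=
  Rpi pi Rw + gamma *: (Ppi P pi *m v).

Definition value (gamma : R) P pi Rw : 'cV[R]_nS :=
  invmx (1%:M - gamma *: Ppi P pi) *m Rpi pi Rw.

Definition occS (gamma : R) P (mu : 'rV[R]_nS) pi : 'rV[R]_nS :=
  mu *m invmx (1%:M - gamma *: Ppi P pi).

Definition occ (gamma : R) P mu pi : 'M[R]_(nS, nA) :=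
  \matrix_(s, a) (occS gamma P mu pi 0 s * pi s a).

Definition Lnorm (r : R) (M : 'M[R]_(nS, nA)) : R :=
  powR (\sum_s \sum_a powR `|M s a| r) (r^-1).

Definition ret (gamma : R) P mu pi (Rw : 'M[R]_(nS, nA)) : R :=
  \sum_s \sum_a occ gamma P mu pi s a * Rw s a.

Definition in_ball (p alpha : R) (R0 Rw : 'M[R]_(nS, nA)) : Prop :=
  Lnorm p (Rw - R0) <= alpha.

Definition worst_reward (gamma : R) P mu pi (p alpha : R) R0 Rw : Prop :=
  in_ball p alpha R0 Rw /\
  forall R', in_ball p alpha R0 R' -> ret gamma P mu pi Rw <= ret gamma P mu pi R'.

Definition Treg (gamma : R) P mu pi (p alpha : R) R0 (v : 'cV[R]_nS)
  : 'cV[R]_nS :=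
  let q := p / (p - 1) in
  let d := occ gamma P mu pi in
  bellman gamma P pi R0 v -
  \col_s (alpha * (\sum_a pi s a * powR (d s a) (q - 1))
                  / powR (Lnorm q d) (q - 1)).

Definition converges_linearly (u : nat -> 'cV[R]_nS) (l : 'cV[R]_nS) : Prop :=
  exists C : R, exists r : R, 0 <= C /\ 0 <= r < 1 /\
    forall n s, `|u n s 0 - l s 0| <= C * r ^+ n.

End MDP.

(* The regularization term is exactly the worst-case perturbation of the
   reward.  Write d for the occupancy measure and q for the exponent conjugate
   to p.  Minimizing the linear functional R |-> <d, R> over the ball
   ||R - R0||_p <= alpha amounts to maximizing <d, u> over the unit ball of
   L_p, and by the equality case of Hoelder's inequality (here obtained from
   Young's inequality, i.e. from strict convexity of exp) the unique maximizer
   is u = d^(q-1) / ||d||_q^(q-1).  Hence the regularized operator is the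
   plain Bellman operator of the worst-case reward.  Since P^pi is
   row-stochastic, that operator is an affine gamma-contraction for the sup
   norm whose fixed point is the value function, and the error decays like
   gamma^n. *)

From mathcomp Require Import all_boot all_order all_algebra.
From mathcomp Require Import reals sequences exp.
From mathcomp Require Import ring lra.
Set Implicit Arguments.
Unset Strict Implicit.
Unset Printing Implicit Defensive.
Import Order.TTheory GRing.Theory Num.Theory.
Local Open Scope ring_scope.

Section StochasticMatrix.
Variables (R : realType) (n : nat) (M : 'M[R]_n) (gamma : R).
Hypothesis M_ge0 : forall i j, 0 <= M i j.
Hypothesis M_row_sum1 : forall i, \sum_j M i j = 1.
Hypothesis gamma_ge0 : 0 <= gamma.

Lemma sum_row_mulmx (x : 'rV[R]_n) : \sum_j (x *m M) 0 j = \sum_i x 0 i.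
Proof.
under eq_bigr do rewrite mxE.
rewrite exchange_big; apply: eq_bigr => i _.
by rewrite -mulr_sumr M_row_sum1 mulr1.
Qed.

Lemma mulmx_col_norm_le (v : 'cV[R]_n) (C : R) :
  (forall j, `|v j 0| <= C) -> forall i, `|(M *m v) i 0| <= C.
Proof.
move=> v_le i; rewrite mxE; apply: le_trans (ler_norm_sum _ _ _) _.
rewrite -[C]mul1r -(M_row_sum1 i) mulr_suml; apply: ler_sum => j _.
by rewrite normrM ger0_norm // ler_wpM2l.
Qed.

Lemma iter_affine_contraction (r V v0 : 'cV[R]_n) (C : R) :
  V = r + gamma *: (M *m V) -> (forall i, `|v0 i 0 - V i 0| <= C) ->
  forall k i, `|iter k (fun v => r + gamma *: (M *m v)) v0 i 0 - V i 0|
              <= C * gamma ^+ k.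
Proof.
move=> V_fix v0_le; elim=> [|k IHk] i; first by rewrite expr0 mulr1.
set T := fun v => _; set vk := iter k T v0.
have err_step : iter k.+1 T v0 - V = gamma *: (M *m (vk - V)).
  rewrite iterS /T [in X in _ - X = _]V_fix mulmxBr scalerBr opprD.
  by rewrite addrACA subrr add0r.
have -> : iter k.+1 T v0 i 0 - V i 0 = (iter k.+1 T v0 - V) i 0 by rewrite !mxE.
rewrite err_step mxE normrM ger0_norm // exprS mulrCA ler_wpM2l //.
by apply: mulmx_col_norm_le => j; rewrite !mxE; apply: IHk.
Qed.

Hypothesis gamma_lt1 : gamma < 1.

Lemma nonneg_subinvariant_row_eq0 {x : 'rV[R]_n} :
  (forall j, 0 <= x 0 j) -> (forall j, x 0 j <= gamma * (x *m M) 0 j) -> x = 0.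
Proof.
move=> x_ge0 x_le.
have sum_le : \sum_j x 0 j <= gamma * \sum_j x 0 j.
  by rewrite -[in X in _ <= X]sum_row_mulmx mulr_sumr; apply: ler_sum.
have sum0 : \sum_j x 0 j = 0.
  apply/eqP; rewrite eq_le sumr_ge0 // andbT.
  have : (1 - gamma) * \sum_j x 0 j <= 0 by rewrite mulrBl mul1r subr_le0.
  by rewrite pmulr_rle0 // subr_gt0.
by apply/rowP => j; rewrite mxE; apply: (psumr_eq0P _ sum0).
Qed.

Lemma fixpoint_row_ge0 {x y : 'rV[R]_n} :
  (forall j, 0 <= y 0 j) -> x = y + gamma *: (x *m M) -> forall j, 0 <= x 0 j.
Proof.
move=> y_ge0 x_fix.
pose neg := \row_j Num.max 0 (- x 0 j).
have neg_ge0 j : 0 <= neg 0 j by rewrite mxE le_max lexx.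
have le_neg j : - x 0 j <= neg 0 j by rewrite mxE le_max lexx orbT.
have neg_le j : neg 0 j <= gamma * (neg *m M) 0 j.
  rewrite {1}mxE ge_max mulr_ge0 ?mxE ?sumr_ge0 // => [|i _]; last first.
    by rewrite mulr_ge0.
  rewrite {1}x_fix !mxE opprD -mulrN -sumrN ler_wnDl ?oppr_le0 //.
  by rewrite ler_wpM2l // ler_sum // => i _; rewrite -mulNr ler_wpM2r.
move=> j; have := le_neg j.
by rewrite (nonneg_subinvariant_row_eq0 neg_ge0 neg_le) mxE oppr_le0.
Qed.

Lemma unitmx_resolvent : 1%:M - gamma *: M \in unitmx.
Proof.
rewrite -row_free_unit; apply: inj_row_free => x.
rewrite mulmxBr mulmx1 -scalemxAr => /eqP; rewrite subr_eq0 => /eqP x_fix.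
have fix_ge0 (z : 'rV[R]_n) : z = gamma *: (z *m M) -> forall j, 0 <= z 0 j.
  move=> z_fix; apply: (fixpoint_row_ge0 (y := 0)) => [k|].
    by rewrite mxE.
  by rewrite add0r.
have Nx_ge0 := fix_ge0 (- x); rewrite mulNmx scalerN -x_fix in Nx_ge0.
apply/rowP => j; apply/eqP; rewrite mxE eq_le fix_ge0 // andbT.
by have := Nx_ge0 erefl j; rewrite mxE oppr_ge0.
Qed.

End StochasticMatrix.

Section ExpConvexity.
Variable R : realType.

Lemma expR_convex_lt (t x y : R) : 0 < t < 1 -> x != y ->
  expR (t * x + (1 - t) * y) < t * expR x + (1 - t) * expR y.
Proof.
move=> /andP[t_gt0 t_lt1] xy; set m := t * x + (1 - t) * y.
have expR_shift z : expR z = expR m * expR (z - m).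
  by rewrite -expRD addrC subrK.
have gap : t * expR x + (1 - t) * expR y - expR m =
    expR m * (t * (expR (x - m) - (1 + (x - m)))
              + (1 - t) * (expR (y - m) - (1 + (y - m)))).
  by rewrite [expR x]expR_shift [expR y]expR_shift /m; ring.
have xm_neq0 : x - m != 0.
  have -> : x - m = (1 - t) * (x - y) by rewrite /m; ring.
  by rewrite mulf_neq0 ?subr_eq0 // gt_eqF.
rewrite -subr_gt0 gap mulr_gt0 ?expR_gt0 // ltr_pwDl //.
  by rewrite mulr_gt0 // subr_gt0 expR_gt1Dx.
by rewrite mulr_ge0 ?subr_ge0 ?expR_ge1Dx //; lra.
Qed.

Lemma expR_convex_le (t x y : R) : 0 < t < 1 ->
  expR (t * x + (1 - t) * y) <= t * expR x + (1 - t) * expR y.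
Proof.
move=> t01; have [->|xy] := eqVneq x y; last exact/ltW/expR_convex_lt.
by rewrite -!mulrDl subrKC !mul1r.
Qed.

End ExpConvexity.

Section ConjugateExponents.
Variables (R : realType) (p q : R).
Hypotheses (p_gt1 : 1 < p) (pq_conj : p^-1 + q^-1 = 1).

Let p_gt0 : 0 < p. Proof. exact: lt_trans ltr01 p_gt1. Qed.
Let invq_eq : q^-1 = 1 - p^-1.
Proof. by rewrite -pq_conj addrAC subrr add0r. Qed.
Let invp_01 : 0 < p^-1 < 1. Proof. by rewrite invr_gt0 p_gt0 invf_lt1. Qed.

Lemma conjugate_gt1 : 1 < q.
Proof.
have : 0 < q^-1 < 1 by rewrite invq_eq; move: invp_01; lra.
by rewrite invr_gt0 => /andP[q_gt0]; rewrite invf_lt1.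
Qed.

Let q_gt0 : 0 < q. Proof. by have := conjugate_gt1; lra. Qed.

Lemma conjugate_mulB1 : (q - 1) * p = q.
Proof.
apply/eqP; rewrite -subr_eq0.
have -> : (q - 1) * p - q = - ((p^-1 + q^-1 - 1) * (p * q)).
  by field; rewrite !gt_eqF.
by rewrite pq_conj subrr mul0r oppr0.
Qed.

Let mul_expR_ln (a b : R) : 0 < a -> 0 < b ->
  a * b = expR (p^-1 * ln (a `^ p) + (1 - p^-1) * ln (b `^ q)).
Proof.
move=> a_gt0 b_gt0.
by rewrite -invq_eq !ln_powR !mulrA !mulVf ?gt_eqF // !mul1r expRD !lnK.
Qed.

Lemma young_le (a b : R) : 0 <= a -> 0 <= b ->
  a * b <= a `^ p / p + b `^ q / q.
Proof.
have pow_div_ge0 (x r : R) : 0 < r -> 0 <= x `^ r / r.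
  by move=> r_gt0; rewrite divr_ge0 ?powR_ge0 ?ltW.
rewrite le_eqVlt => /predU1P[<-|a_gt0].
  by rewrite mul0r addr_ge0 ?pow_div_ge0.
rewrite le_eqVlt => /predU1P[<-|b_gt0].
  by rewrite mulr0 addr_ge0 ?pow_div_ge0.
have := expR_convex_le (ln (a `^ p)) (ln (b `^ q)) invp_01.
by rewrite -mul_expR_ln // !lnK ?posrE ?powR_gt0 // -invq_eq !(mulrC _^-1).
Qed.

Lemma young_eq (a b : R) : 0 <= a -> 0 <= b ->
  a * b = a `^ p / p + b `^ q / q -> a `^ p = b `^ q.
Proof.
have pow_div_eq0 (x r : R) : 0 < r -> 0 = x `^ r / r -> x `^ r = 0.
  move=> r_gt0 /esym/eqP.
  by rewrite mulf_eq0 invr_eq0 (gt_eqF r_gt0) orbF => /eqP.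
rewrite le_eqVlt => /predU1P[<-|a_gt0] b_ge0.
  by rewrite mul0r powR0 ?gt_eqF // mul0r add0r => /pow_div_eq0 ->.
rewrite le_eqVlt in b_ge0; case/predU1P: b_ge0 => [<-|b_gt0].
  by rewrite mulr0 powR0 ?gt_eqF // mul0r addr0 => /pow_div_eq0 ->.
apply: contra_eq => neq_pow.
have /expR_convex_lt : ln (a `^ p) != ln (b `^ q).
  by apply: contra neq_pow => /eqP/ln_inj -> //; rewrite posrE powR_gt0.
move=> /(_ _ invp_01); rewrite -mul_expR_ln // !lnK ?posrE ?powR_gt0 //.
by rewrite -invq_eq !(mulrC _^-1) => /lt_eqF ->.
Qed.

Lemma young_eq_powR (u b : R) : 0 <= b ->
  u * b = `|u| `^ p / p + b `^ q / q -> u = b `^ (q - 1).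
Proof.
move=> b_ge0 eq_young.
have le_norm : u * b <= `|u| * b by rewrite ler_wpM2r // ler_norm.
have norm_eq : `|u| * b = u * b.
  apply/eqP; rewrite eq_le le_norm andbT [leRHS]eq_young young_le //.
have /young_eq pow_eq : `|u| * b = `|u| `^ p / p + b `^ q / q.
  by rewrite norm_eq.
move: pow_eq => /(_ (normr_ge0 u) b_ge0).
rewrite le_eqVlt in b_ge0; case/predU1P: b_ge0 => [<-|b_gt0].
  rewrite !powR0 ?gt_eqF ?subr_gt0 ?conjugate_gt1 // => /powR_eq0_eq0/eqP.
  by rewrite normr_eq0 => /eqP.
have u_ge0 : 0 <= u by rewrite -(mulIf (lt0r_neq0 b_gt0) norm_eq).
rewrite ger0_norm // -{1}conjugate_mulB1 powRrM => /(powR_injective p_gt0).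
by apply; rewrite nnegrE ?powR_ge0.
Qed.

Lemma unit_ball_maximizer_eq (I : finType) (u delta : I -> R) :
  (forall i, 0 <= delta i) -> \sum_i delta i `^ q = 1 ->
  \sum_i `|u i| `^ p <= 1 -> 1 <= \sum_i u i * delta i ->
  forall i, u i = delta i `^ (q - 1).
Proof.
move=> delta_ge0 sum_delta sum_u sum_ud.
pose gap i := `|u i| `^ p / p + delta i `^ q / q - u i * delta i.
have gap_ge0 i : 0 <= gap i.
  rewrite subr_ge0 (le_trans (ler_wpM2r (delta_ge0 i) (ler_norm (u i)))) //.
  exact: young_le.
have sum_gap : \sum_i gap i = 0.
  apply/eqP; rewrite eq_le sumr_ge0 // andbT.
  rewrite sumrB big_split /= -!mulr_suml sum_delta mul1r.
  have : (\sum_i `|u i| `^ p) / p <= p^-1.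
    by rewrite -[leRHS]mul1r ler_wpM2r // invr_ge0 ltW.
  move: (_ / p) (\sum_i u i * delta i) sum_ud pq_conj => x y; lra.
move=> i; apply: young_eq_powR (delta_ge0 i) _; apply/esym/eqP.
by rewrite -subr_eq0; apply/eqP/(psumr_eq0P (fun i _ => gap_ge0 i) sum_gap).
Qed.

End ConjugateExponents.

Lemma powR_div (R : realType) (x y r : R) :
  0 <= x -> 0 < y -> (x / y) `^ r = x `^ r / y `^ r.
Proof.
move=> x_ge0 y_gt0; rewrite powRM ?invr_ge0 ?(ltW y_gt0) //.
by rewrite -powR_inv1 ?ltW // -powRrM mulN1r powRN.
Qed.

Lemma conjugate_exponent (R : realType) (p : R) :
  1 < p -> p^-1 + (p / (p - 1))^-1 = 1.
Proof.
by move=> p_gt1; rewrite invf_div; field; rewrite gt_eqF // (lt_trans ltr01).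
Qed.

Section Lnorm.
Variables (R : realType) (m n : nat).
Implicit Types (r : R) (M : 'M[R]_(m, n)).

Let sum_powR_ge0 r M : 0 <= \sum_s \sum_a `|M s a| `^ r.
Proof. by apply: sumr_ge0 => s _; apply: sumr_ge0 => a _; apply: powR_ge0. Qed.

Lemma Lnorm_powR r M :
  r != 0 -> Lnorm r M `^ r = \sum_s \sum_a `|M s a| `^ r.
Proof. by move=> r_neq0; rewrite /Lnorm -powRrM mulVf // powRr1. Qed.

Lemma Lnorm_le1 r M :
  0 < r -> Lnorm r M <= 1 -> \sum_s \sum_a `|M s a| `^ r <= 1.
Proof.
move=> r_gt0 M_le1; rewrite -Lnorm_powR ?gt_eqF //.
have := @ge0_ler_powR R r (ltW r_gt0) (Lnorm r M) 1; rewrite powR1.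
by apply; rewrite ?nnegrE ?powR_ge0.
Qed.

Lemma LnormZ r (c : R) M : r != 0 -> Lnorm r (c *: M) = `|c| * Lnorm r M.
Proof.
move=> r_neq0; rewrite /Lnorm.
under eq_bigr do under eq_bigr do rewrite mxE normrM powRM //.
under eq_bigr do rewrite -mulr_sumr.
by rewrite -mulr_sumr powRM ?powR_ge0 // -powRrM mulfV // powRr1.
Qed.

Lemma Lnorm_gt0 r M s a : M s a != 0 -> 0 < Lnorm r M.
Proof.
move=> Msa_neq0; rewrite /Lnorm powR_gt0 // pair_bigA (bigD1 (s, a)) //=.
rewrite ltr_wpDr ?sumr_ge0 // => [x _|]; first exact: powR_ge0.
by rewrite powR_gt0 ?normr_gt0.
Qed.

End Lnorm.

Definition hoelder_dual (R : realType) m n (q : R) (d : 'M[R]_(m, n)) :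
  'M[R]_(m, n) := \matrix_(s, a) (d s a `^ (q - 1) / Lnorm q d `^ (q - 1)).

Section WorstCaseReward.
Variables (R : realType) (m n : nat) (p alpha : R) (R0 d : 'M[R]_(m, n)).
Let q := p / (p - 1).
Hypotheses (p_gt1 : 1 < p) (alpha_gt0 : 0 < alpha).
Hypotheses (d_ge0 : forall s a, 0 <= d s a) (Lnorm_d_gt0 : 0 < Lnorm q d).

Let pq_conj := conjugate_exponent p_gt1.
Let p_gt0 : 0 < p. Proof. exact: lt_trans ltr01 p_gt1. Qed.
Let p_neq0 : p != 0. Proof. exact: lt0r_neq0. Qed.
Let q_gt0 : 0 < q.
Proof. exact: lt_trans ltr01 (conjugate_gt1 p_gt1 pq_conj). Qed.
Let D := Lnorm q d.
Let delta s a := d s a / D.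
Let delta_ge0 s a : 0 <= delta s a. Proof. by rewrite divr_ge0 // ltW. Qed.

Let sum_delta_powR : \sum_s \sum_a delta s a `^ q = 1.
Proof.
under eq_bigr do under eq_bigr do rewrite powR_div //.
under eq_bigr do rewrite -mulr_suml.
rewrite -mulr_suml; have -> : \sum_s \sum_a d s a `^ q = D `^ q.
  rewrite /D Lnorm_powR ?gt_eqF //.
  by apply: eq_bigr => s _; apply: eq_bigr => a _; rewrite ger0_norm.
by rewrite mulfV // gt_eqF // powR_gt0.
Qed.

Let hoelder_dualE s a : hoelder_dual q d s a = delta s a `^ (q - 1).
Proof. by rewrite mxE powR_div. Qed.

Lemma Lnorm_hoelder_dual : Lnorm p (hoelder_dual q d) = 1.
Proof.
rewrite /Lnorm; under eq_bigr do under eq_bigr do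
  rewrite hoelder_dualE ger0_norm ?powR_ge0 // -powRrM conjugate_mulB1 //.
by rewrite sum_delta_powR powR1.
Qed.

Lemma sum_mul_hoelder_dual :
  \sum_s \sum_a d s a * hoelder_dual q d s a = Lnorm q d.
Proof.
have d_eq s a : d s a = D * delta s a by rewrite mulrC divfK ?gt_eqF.
under eq_bigr do under eq_bigr do
  rewrite hoelder_dualE d_eq -mulrA mulr_powRB1 //.
under eq_bigr do rewrite -mulr_sumr.
by rewrite -mulr_sumr sum_delta_powR mulr1.
Qed.

Lemma in_ball_hoelder_dual :
  in_ball p alpha R0 (R0 - alpha *: hoelder_dual q d).
Proof.
rewrite /in_ball addrAC subrr add0r -scaleNr LnormZ //.
by rewrite Lnorm_hoelder_dual mulr1 normrN gtr0_norm.
Qed.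

Lemma ball_minimizer_eq (Rw : 'M[R]_(m, n)) :
  in_ball p alpha R0 Rw ->
  (forall R', in_ball p alpha R0 R' ->
     \sum_s \sum_a d s a * Rw s a <= \sum_s \sum_a d s a * R' s a) ->
  Rw = R0 - alpha *: hoelder_dual q d.
Proof.
move=> Rw_ball Rw_min.
pose U := alpha^-1 *: (R0 - Rw).
have sum_U : \sum_x `|U x.1 x.2| `^ p <= 1.
  rewrite -(pair_bigA _ (fun s a => `|U s a| `^ p)) Lnorm_le1 //.
  rewrite /U -opprB -scaleN1r scalerA LnormZ // normrM normrN1 mulr1.
  by rewrite normfV gtr0_norm // ler_pdivrMl // mulr1.
have sum_Udelta : 1 <= \sum_x U x.1 x.2 * delta x.1 x.2.
  have := Rw_min _ in_ball_hoelder_dual.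
  have -> : \sum_s \sum_a d s a * (R0 - alpha *: hoelder_dual q d) s a =
      \sum_s \sum_a d s a * R0 s a - alpha * D.
    rewrite /D -sum_mul_hoelder_dual mulr_sumr -sumrB.
    apply: eq_bigr => s _; rewrite mulr_sumr -sumrB.
    by apply: eq_bigr => a _; rewrite !mxE; ring.
  have -> : \sum_x U x.1 x.2 * delta x.1 x.2 = (alpha * D)^-1 *
      (\sum_s \sum_a d s a * R0 s a - \sum_s \sum_a d s a * Rw s a).
    rewrite -(pair_bigA _ (fun s a => U s a * delta s a)) -sumrB mulr_sumr.
    apply: eq_bigr => s _; rewrite -sumrB mulr_sumr; apply: eq_bigr => a _.
    by rewrite !mxE /delta; field; rewrite !gt_eqF.
  rewrite ler_pdivlMl ?mulr_gt0 // mulr1; lra.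
have U_eq x : U x.1 x.2 = delta x.1 x.2 `^ (q - 1).
  apply: (unit_ball_maximizer_eq (u := fun x => U x.1 x.2) p_gt1 pq_conj
            (fun x => delta_ge0 x.1 x.2)) => //.
  by rewrite -(pair_bigA _ (fun s a => delta s a `^ q)).
apply/matrixP => s a; have := U_eq (s, a).
rewrite -hoelder_dualE !mxE => <-.
by field; rewrite gt_eqF.
Qed.

End WorstCaseReward.

Section PolicyEvaluation.
Variables (R : realType) (nS nA : nat).
Variables (P : 'I_nS -> 'I_nA -> 'I_nS -> R) (pi : 'M[R]_(nS, nA)) (gamma : R).
Hypotheses (P_kernel : is_kernel P) (pi_policy : is_policy pi).

Lemma Ppi_ge0 s s' : 0 <= Ppi P pi s s'.
Proof.
rewrite mxE; apply: sumr_ge0 => a _.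
by rewrite mulr_ge0 ?(proj1 pi_policy) ?(proj1 P_kernel).
Qed.

Lemma Ppi_row_sum1 s : \sum_s' Ppi P pi s s' = 1.
Proof.
under eq_bigr do rewrite mxE.
rewrite exchange_big -(proj2 pi_policy s); apply: eq_bigr => a _.
by rewrite -mulr_sumr (proj2 P_kernel) mulr1.
Qed.

Hypotheses (gamma_ge0 : 0 <= gamma) (gamma_lt1 : gamma < 1).

Let resolvent_unit :=
  unitmx_resolvent Ppi_ge0 Ppi_row_sum1 gamma_ge0 gamma_lt1.

Lemma bellman_value Rw :
  bellman gamma P pi Rw (value gamma P pi Rw) = value gamma P pi Rw.
Proof.
have := mulKVmx resolvent_unit (Rpi pi Rw); rewrite /bellman /value.
set v := invmx _ *m _ => resolvent_v.
by rewrite -{1}resolvent_v mulmxBl mul1mx -scalemxAl subrK.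
Qed.

Lemma occS_fix mu :
  occS gamma P mu pi = mu + gamma *: (occS gamma P mu pi *m Ppi P pi).
Proof.
have := mulmxKV resolvent_unit mu; rewrite /occS.
set d := mu *m _ => d_resolvent.
by rewrite -{1}d_resolvent mulmxBr mulmx1 -scalemxAr subrK.
Qed.

Variable mu : 'rV[R]_nS.
Hypothesis mu_gt0 : forall s, 0 < mu 0 s.

Lemma occS_gt0 s : 0 < occS gamma P mu pi 0 s.
Proof.
have occS_ge0 := fixpoint_row_ge0 Ppi_ge0 Ppi_row_sum1 gamma_ge0 gamma_lt1
  (fun s => ltW (mu_gt0 s)) (occS_fix mu).
rewrite occS_fix !mxE ltr_pwDl // mulr_ge0 // sumr_ge0 // => s' _.
by rewrite mulr_ge0 ?Ppi_ge0.
Qed.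

Lemma occ_ge0 s a : 0 <= occ gamma P mu pi s a.
Proof. by rewrite mxE mulr_ge0 ?(proj1 pi_policy) ?(ltW (occS_gt0 s)). Qed.

(* [s] only witnesses that the state space is nonempty. *)
Lemma Lnorm_occ_gt0 r (s : 'I_nS) : 0 < Lnorm r (occ gamma P mu pi).
Proof.
have [a pi_sa_neq0] : exists a, pi s a != 0.
  case: (pickP (fun a => pi s a != 0)) => [a pi_sa|pi_s0]; first by exists a.
  have := proj2 pi_policy s; rewrite big1 => [/eqP|a _]; last first.
    by apply/eqP/negbFE/pi_s0.
  by rewrite eq_sym oner_eq0.
apply: (Lnorm_gt0 r (s := s) (a := a)).
by rewrite mxE mulf_neq0 // lt0r_neq0 // occS_gt0.
Qed.

End PolicyEvaluation.

Lemma Treg_bellman (R : realType) nS nA (P : 'I_nS -> 'I_nA -> 'I_nS -> R)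
    (gamma : R) mu pi (p alpha : R) R0 v :
  Treg gamma P mu pi p alpha R0 v =
  bellman gamma P pi
    (R0 - alpha *: hoelder_dual (p / (p - 1)) (occ gamma P mu pi)) v.
Proof.
rewrite /Treg /bellman; set d := occ _ _ _ _; clearbody d.
rewrite addrAC; congr (_ + _); apply/colP => s.
rewrite !mxE; under [RHS]eq_bigr do rewrite !mxE mulrBr.
rewrite sumrB mulr_sumr mulr_suml; congr (_ - _).
by apply: eq_bigr => a _; ring.
Qed.

Unset Implicit Arguments.

Theorem theorem2 (R : realType) (nS nA : nat)
  (P : 'I_nS -> 'I_nA -> 'I_nS -> R) (gamma : R) (mu : 'rV[R]_nS)
  (p alpha : R) (R0 : 'M[R]_(nS, nA)) (pi : 'M[R]_(nS, nA))
  (Rstar : 'M[R]_(nS, nA)) (v0 : 'cV[R]_nS) :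
  is_kernel P -> 0 <= gamma < 1 -> is_init_dist mu ->
  1 < p -> 0 < alpha -> is_policy pi ->
  worst_reward gamma P mu pi p alpha R0 Rstar ->
  converges_linearly
    (fun n => iter n (Treg gamma P mu pi p alpha R0) v0)
    (value gamma P pi Rstar).
Proof.
move=> P_kernel /andP[gamma_ge0 gamma_lt1] [mu_gt0 _] p_gt1 alpha_gt0 pi_policy.
move=> [Rstar_ball Rstar_min]; set V := value gamma P pi Rstar.
exists (\sum_s `|v0 s 0 - V s 0|), gamma.
split; first exact: sumr_ge0.
split; first by rewrite gamma_ge0.
move=> k s.
have Rstar_eq :
    Rstar = R0 - alpha *: hoelder_dual (p / (p - 1)) (occ gamma P mu pi).
  apply: (ball_minimizer_eq p_gt1 alpha_gt0) Rstar_ball Rstar_min.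
  - exact: occ_ge0.
  - exact: Lnorm_occ_gt0 _ s.
have Treg_eq : Treg gamma P mu pi p alpha R0 =1 bellman gamma P pi Rstar.
  by move=> v; rewrite Treg_bellman -Rstar_eq.
rewrite (eq_iter Treg_eq).
have V_fix := bellman_value P_kernel pi_policy gamma_ge0 gamma_lt1 Rstar.
apply: (iter_affine_contraction (Ppi_ge0 P_kernel pi_policy)
          (Ppi_row_sum1 P_kernel pi_policy) gamma_ge0 (esym V_fix)).
by move=> i; rewrite (bigD1 i) //= lerDl sumr_ge0.
Qed.
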